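(* Let $\mathcal{X}\subseteq\mathbb{R}^d$ be nonempty, closed and convex, let $f:\mathbb{R}^d\to\mathbb{R}$ be differentiable (not necessarily convex), and assume the set $\mathcal{X}_\star:=\operatorname{arg\,min}_{x\in\mathcal{X}} f(x)$ is nonempty. Fix $x_k\in\mathcal{X}$ and $x_\star\in\mathcal{X}_\star$, and suppose that one of the following two conditions holds: (Type I) $\nabla f(x_k)\neq 0$ and $0<t_k\le \dfrac{\langle \nabla f(x_k),x_k-x_\star\rangle}{\|\nabla f(x_k)\|}$; (Type II) $\nabla f(x_k)\neq\nabla f(x_\star)$ and $0<t_k\le \dfrac{\langle \nabla f(x_k)-\nabla f(x_\star),x_k-x_\star\rangle}{\|\nabla f(x_k)-\nabla f(x_\star)\|}$. Let $x_{k+1}\in\operatorname{arg\,min}_{z\in\mathcal{X}\cap\mathcal{B}(x_k,t_k)}\langle\nabla f(x_k),z\rangle$. Then: (i) $t_k\le\|x_k-x_\star\|$; (ii) $\|x_{k+1}-x_k\|=t_k$; (iii) $\|x_{k+1}-x_\star\|^2\le\|x_k-x_\star\|^2-t_k^2$.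
   Context: $\|\cdot\|$ is the Euclidean norm and $\langle\cdot,\cdot\rangle$ the standard inner product on $\mathbb{R}^d$; $\mathcal{B}(x,t):=\{y\in\mathbb{R}^d:\|y-x\|\le t\}$. *)

From HB Require Import structures.
From mathcomp Require Import all_boot all_order all_algebra.
From mathcomp Require Import all_classical all_reals all_analysis.
Set Implicit Arguments. Unset Strict Implicit. Unset Printing Implicit Defensive.
Import Order.TTheory GRing.Theory Num.Theory.
Import numFieldNormedType.Exports.
Local Open Scope classical_set_scope.
Local Open Scope ring_scope.

Definition dotp (R : realType) (d : nat) (u v : 'rV[R]_d) : R :=
  \sum_(i < d) u ord0 i * v ord0 i.

Definition enorm (R : realType) (d : nat) (u : 'rV[R]_d) : R :=
  Num.sqrt (dotp u u).

Definition eball (R : realType) (d : nat) (x : 'rV[R]_d) (t : R) : set 'rV[R]_d :=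
  [set y | enorm (y - x) <= t].

Definition is_gradient (R : realType) (d : nat) (f : 'rV[R]_d -> R)
    (g : 'rV[R]_d -> 'rV[R]_d) : Prop :=
  forall x, differentiable f x /\ forall h, 'd f x h = dotp (g x) h.

Definition is_argmin (T : Type) (R : realType) (f : T -> R) (A : set T) (x : T) : Prop :=
  A x /\ forall y, A y -> f x <= f y.

From HB Require Import structures.
From mathcomp Require Import all_boot all_order all_algebra.
From mathcomp Require Import all_classical all_reals all_analysis.
From mathcomp Require Import ring lra.
Set Implicit Arguments. Unset Strict Implicit. Unset Printing Implicit Defensive.
Import Order.TTheory GRing.Theory Num.Theory.
Import numFieldNormedType.Exports.
Local Open Scope classical_set_scope.
Local Open Scope ring_scope.

(* Put a := x_k - x_{k+1}, b := x_k - x⋆ and c := grad f(x_k) (Type I) or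
   c := grad f(x_k) - grad f(x⋆) (Type II), so that t_k |c| <= <c, b>.  It
   suffices to show |a| = t_k and <a, b> >= t_k^2: (i)-(iii) then follow by
   expanding |b - a|^2.  If this fails, a short step from x_{k+1} towards x⋆
   stays in X and in the ball B(x_k, t_k), so minimality of x_{k+1} gives
   <grad f(x_k), x⋆ - x_{k+1}> >= 0; together with first-order optimality of
   x⋆ in Type II this yields <c, b> <= <c, a>.  But then
   t_k |c| <= <c, a> <= |c| |a| <= t_k |c| is the equality case of
   Cauchy-Schwarz, which forces |c| a = t_k c, and this gives the claim after
   all. *)

Lemma convex_set_segment (R : realType) (M : lmodType R) (X : set M)
    (x z : M) (l : R) :
  convex_set X -> X x -> X z -> 0 <= l <= 1 -> X (x + l *: (z - x)).
Proof.
move=> cX Xx Xz /andP[l0 l1].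
have := cX z x (Itv01 l0 l1); rewrite !inE => /(_ Xz Xx) Xzx.
suff -> : x + l *: (z - x) = l *: z + (1 - l) *: x by [].
by rewrite scalerBr scalerBl scale1r addrCA.
Qed.

Section euclidean.
Variables (R : realType) (d : nat).
Implicit Types (c u v w : 'rV[R]_d) (k t : R).

Lemma dotpC u v : dotp u v = dotp v u.
Proof. by apply: eq_bigr => i _; rewrite mulrC. Qed.

Lemma dotpDr u v w : dotp u (v + w) = dotp u v + dotp u w.
Proof. by rewrite /dotp -big_split; apply: eq_bigr => i _; rewrite mxE mulrDr. Qed.

Lemma dotpZr u v k : dotp u (k *: v) = k * dotp u v.
Proof. by rewrite /dotp mulr_sumr; apply: eq_bigr => i _; rewrite mxE mulrCA. Qed.

Lemma dotpNr u v : dotp u (- v) = - dotp u v.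
Proof. by rewrite -scaleN1r dotpZr mulN1r. Qed.

Lemma dotpBr u v w : dotp u (v - w) = dotp u v - dotp u w.
Proof. by rewrite dotpDr dotpNr. Qed.

Lemma dotpDl u v w : dotp (v + w) u = dotp v u + dotp w u.
Proof. by rewrite dotpC dotpDr !(dotpC u). Qed.

Lemma dotpZl u v k : dotp (k *: v) u = k * dotp v u.
Proof. by rewrite dotpC dotpZr dotpC. Qed.

Lemma dotpNl u v : dotp (- v) u = - dotp v u.
Proof. by rewrite dotpC dotpNr dotpC. Qed.

Lemma dotpBl u v w : dotp (v - w) u = dotp v u - dotp w u.
Proof. by rewrite dotpC dotpBr !(dotpC u). Qed.

Lemma dotp_ge0 u : 0 <= dotp u u.
Proof. by apply: sumr_ge0 => i _; rewrite -expr2 sqr_ge0. Qed.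

Lemma dotp_eq0 u : (dotp u u == 0) = (u == 0).
Proof.
apply/idP/eqP => [|->]; last by rewrite /dotp big1 // => i _; rewrite mxE mul0r.
rewrite psumr_eq0 => [/allP u0|i _]; last by rewrite -expr2 sqr_ge0.
apply/rowP => i; apply/eqP; rewrite mxE -[_ == 0]orbb -mulf_eq0.
exact: u0 (mem_index_enum i).
Qed.

Lemma enorm_ge0 u : 0 <= enorm u.
Proof. exact: sqrtr_ge0. Qed.

Lemma enorm_sqr u : enorm u ^+ 2 = dotp u u.
Proof. by rewrite sqr_sqrtr // dotp_ge0. Qed.

Lemma enorm_gt0 u : (0 < enorm u) = (u != 0).
Proof. by rewrite sqrtr_gt0 lt_def dotp_ge0 dotp_eq0 andbT. Qed.

Lemma enormZ k u : enorm (k *: u) = `|k| * enorm u.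
Proof. by rewrite /enorm dotpZl dotpZr mulrA -expr2 sqrtrM ?sqr_ge0 // sqrtr_sqr. Qed.

Lemma enormN u : enorm (- u) = enorm u.
Proof. by rewrite -scaleN1r enormZ normrN1 mul1r. Qed.

Lemma enorm_le u t : 0 <= t -> (enorm u <= t) = (dotp u u <= t ^+ 2).
Proof.
by move=> t0; rewrite /enorm -{1}(ger0_norm t0) -sqrtr_sqr ler_sqrt // sqr_ge0.
Qed.

Lemma cauchy_schwarz_equality c u t :
  enorm u <= t -> t * enorm c <= dotp c u -> enorm c *: u = t *: c.
Proof.
move=> ut tcu; have t0 : 0 <= t := le_trans (enorm_ge0 u) ut.
have tc0 : 0 <= t * enorm c by rewrite mulr_ge0 ?enorm_ge0.
have u2 : enorm u ^+ 2 <= t ^+ 2 by rewrite ler_pXn2r // ?nnegrE enorm_ge0.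
have tcu2 : (t * enorm c) ^+ 2 <= t * enorm c * dotp c u by rewrite expr2 ler_wpM2l.
have c2u2 : enorm c ^+ 2 * enorm u ^+ 2 <= enorm c ^+ 2 * t ^+ 2.
  by rewrite ler_wpM2l ?sqr_ge0.
apply/eqP; rewrite -subr_eq0 -dotp_eq0 eq_le dotp_ge0 andbT.
rewrite !(dotpBl, dotpBr, dotpZl, dotpZr) (dotpC u c) -!enorm_sqr.
nra.
Qed.

Lemma dotp_squeeze c u w t : c != 0 -> enorm u <= t ->
  t * enorm c <= dotp c w -> dotp c w <= dotp c u ->
  enorm u = t /\ t ^+ 2 <= dotp u w.
Proof.
move=> c0 ut tcw cwu; have c_gt0 : 0 < enorm c by rewrite enorm_gt0.
have t0 : 0 <= t := le_trans (enorm_ge0 u) ut.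
have cu := cauchy_schwarz_equality ut (le_trans tcw cwu).
split.
  apply: (mulfI (lt0r_neq0 c_gt0)).
  have := congr1 (@enorm R d) cu.
  by rewrite !enormZ !ger0_norm ?enorm_ge0 // => ->; rewrite mulrC.
rewrite -(ler_pM2l c_gt0) -dotpZl cu dotpZl expr2 mulrCA ler_wpM2l //.
by rewrite mulrC.
Qed.

Lemma exists_small_quadratic_le (p q r : R) : 0 <= p -> 0 <= r -> 0 < p \/ 0 < q ->
  exists2 l, 0 < l <= 1 & l ^+ 2 * r <= p + 2 * l * q.
Proof.
move=> p0 r0 [p_gt0|q_gt0].
- (* As l <= 1 and -2q <= q^2 + 1, l^2 r - 2lq <= l (p + q^2 + r + 2) = p. *)
  have D0 : 0 < p + q ^+ 2 + r + 2 by nra.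
  pose l := p / (p + q ^+ 2 + r + 2).
  have lD : l * (p + q ^+ 2 + r + 2) = p by rewrite /l mulfVK // lt0r_neq0.
  have l0 : 0 < l by rewrite divr_gt0.
  have l1 : l <= 1 by rewrite ler_pdivrMr // mul1r; nra.
  exists l; first by rewrite l0 l1.
  have lrl : l ^+ 2 * r <= l * r
    by rewrite expr2 -mulrA; apply: ler_piMl => //; exact: mulr_ge0 (ltW l0) r0.
  have : 0 <= l * (p + (q + 1) ^+ 2 + 1) by apply: mulr_ge0; [exact: ltW | nra].
  nra.
- have D0 : 0 < 2 * q + r + 1 by nra.
  pose l := 2 * q / (2 * q + r + 1).
  have lD : l * (2 * q + r + 1) = 2 * q by rewrite /l mulfVK // lt0r_neq0.
  have l0 : 0 < l by rewrite divr_gt0 // mulr_gt0.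
  have l1 : l <= 1 by rewrite ler_pdivrMr // mul1r; nra.
  exists l; first by rewrite l0 l1.
  have : l * (l * r) <= l * (2 * q) by rewrite ler_pM2l //; nra.
  nra.
Qed.

(* The second alternative says that the segment from [u] towards [w] enters
   the ball of radius [t] transversally when [u] is on its boundary. *)
Lemma ball_segment u w t : enorm u <= t -> enorm u < t \/ dotp u w < t ^+ 2 ->
  exists2 l, 0 < l <= 1 & enorm (u + l *: (w - u)) <= t.
Proof.
move=> ut inward; have t0 : 0 <= t := le_trans (enorm_ge0 u) ut.
have slack : 0 <= t ^+ 2 - dotp u u by rewrite subr_ge0 -enorm_le.
have pos : 0 < t ^+ 2 - dotp u u \/ 0 < dotp u u - dotp u w.
  rewrite !subr_gt0; have [uu|] := ltP (dotp u u) (t ^+ 2); first by left.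
  case: inward => [ut_lt tu|uw tu]; last by right; exact: lt_le_trans uw tu.
  by have := enorm_sqr u; have := enorm_ge0 u; nra.
have [l l01 hl] := exists_small_quadratic_le slack (dotp_ge0 (w - u)) pos.
exists l => //; rewrite enorm_le //.
rewrite !(dotpDl, dotpDr, dotpZl, dotpZr, dotpNl, dotpNr) (dotpC w u) in hl *.
nra.
Qed.

End euclidean.

Section optimality.
Variables (R : realType) (d : nat).
Implicit Types (X : set 'rV[R]_d) (g u w x y z : 'rV[R]_d) (t : R).

Lemma argmin_grad_dotp_ge0 X f gradf x z : convex_set X -> is_gradient f gradf ->
  is_argmin f X x -> X z -> 0 <= dotp (gradf x) (z - x).
Proof.
move=> cX /(_ x)[fx dfx] [Xx xmin] Xz.
set v := z - x; rewrite -dfx -deriveE //.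
pose quot h := h^-1 *: ((f \o shift x) (h *: v) - f x).
have quot_cvg : quot @ 0^'+ --> 'D_v f x.
  apply: (@cvg_trans _ (quot @ 0^')); last exact: diff_derivable.
  by apply: cvg_app; apply: within_subset => h /= /lt0r_neq0.
apply: (cvgr_to_ge quot_cvg); near=> h.
have h0 : 0 < h by near: h; exact: nbhs_right_gt.
have h1 : h <= 1 by near: h; apply: nbhs_right_le; exact: ltr01.
apply: mulr_ge0; first by rewrite invr_ge0 ltW.
rewrite subr_ge0 /= addrC; apply: xmin.
by apply: convex_set_segment; rewrite ?ltW ?h1.
Unshelve. all: by end_near.
Qed.

Lemma argmin_dotp_ball_ge0 X g x y z t : convex_set X ->
  is_argmin (dotp g) (X `&` eball x t) y -> X z ->
  enorm (x - y) < t \/ dotp (x - y) (x - z) < t ^+ 2 -> 0 <= dotp g (z - y).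
Proof.
move=> cX [[Xy yball] ymin] Xz inward.
have xy_t : enorm (x - y) <= t by rewrite -enormN opprB.
have [l /andP[l0 l1] lball] := ball_segment xy_t inward.
have : dotp g y <= dotp g (y + l *: (z - y)).
  apply: ymin; split; first by apply: convex_set_segment => //; rewrite ltW.
  rewrite /eball /= -enormN.
  suff -> : - (y + l *: (z - y) - x) = x - y + l *: (x - z - (x - y)) by [].
  by apply/rowP => i; rewrite !mxE; ring.
by rewrite dotpDr dotpZr lerDl pmulr_rge0.
Qed.

Lemma enorm_step_sqr_le u w t : enorm u = t -> t ^+ 2 <= dotp u w ->
  enorm (w - u) ^+ 2 <= enorm w ^+ 2 - t ^+ 2.
Proof.
by move=> <- uw; rewrite !enorm_sqr !(dotpBl, dotpBr) (dotpC w u) in uw *; lra.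
Qed.

End optimality.

Theorem theorem1 (R : realType) (d : nat) (X : set 'rV[R]_d)
    (f : 'rV[R]_d -> R) (gradf : 'rV[R]_d -> 'rV[R]_d)
    (xk xstar xk1 : 'rV[R]_d) (tk : R) :
  X !=set0 -> closed X -> convex_set X ->
  is_gradient f gradf ->
  (exists x, is_argmin f X x) ->
  X xk -> is_argmin f X xstar ->
  ((gradf xk != 0 /\ 0 < tk /\
      tk <= dotp (gradf xk) (xk - xstar) / enorm (gradf xk))
   \/
   (gradf xk != gradf xstar /\ 0 < tk /\
      tk <= dotp (gradf xk - gradf xstar) (xk - xstar)
            / enorm (gradf xk - gradf xstar))) ->
  is_argmin (fun z => dotp (gradf xk) z) (X `&` eball xk tk) xk1 ->
  [/\ tk <= enorm (xk - xstar),
      enorm (xk1 - xk) = tk &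
      enorm (xk1 - xstar) ^+ 2 <= enorm (xk - xstar) ^+ 2 - tk ^+ 2].
Proof.
move=> _ _ cX gradf_f _ _ xstar_min Htype xk1_min.
have tk0 : 0 < tk by case: Htype => -[_ []].
set a := xk - xk1; set b := xk - xstar.
have ba : xk1 - xstar = b - a by rewrite /a /b opprB [RHS]addrC subrKA.
have ab : xstar - xk1 = a - b by rewrite -opprB ba opprB.
have [c [c0 tc descent]] : exists c, [/\ c != 0, tk * enorm c <= dotp c b &
    0 <= dotp (gradf xk) (a - b) -> dotp c b <= dotp c a].
  case: Htype => -[g0 [_ tk_le]].
    exists (gradf xk); rewrite -ler_pdivlMr ?enorm_gt0 //.
    by split=> //; rewrite dotpBr subr_ge0.
  exists (gradf xk - gradf xstar); rewrite -ler_pdivlMr ?enorm_gt0 ?subr_eq0 //.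
  split=> // gdesc; have := argmin_grad_dotp_ge0 cX gradf_f xstar_min xk1_min.1.1.
  by rewrite ba; rewrite !(dotpBl, dotpBr) in gdesc *; lra.
have [step_eq step_dotp] : enorm a = tk /\ tk ^+ 2 <= dotp a b.
  have a_le : enorm a <= tk.
    by case: xk1_min => -[_]; rewrite /eball /= -enormN opprB.
  have [inward|] := boolP ((enorm a < tk) || (dotp a b < tk ^+ 2)).
    apply: dotp_squeeze c0 a_le tc (descent _); rewrite -ab.
    exact: argmin_dotp_ball_ge0 cX xk1_min xstar_min.1 (orP inward).
  rewrite negb_or -!leNgt => /andP[ta tab]; split => //.
  by apply/eqP; rewrite eq_le a_le.
have dist := enorm_step_sqr_le step_eq step_dotp.
split; last by rewrite ba.
  by have := enorm_ge0 b; have := sqr_ge0 (enorm (b - a)); nra.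
by rewrite -enormN opprB.
Qed.
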